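(* For $A \in \mathbb{Q}$ let $$g_A(x) = b_3\,(x(x-15))^3 + b_2\,(x(x-15))^2 + b_1\,x(x-15) + b_0,$$ where $$b_0 = 36\,(128941675300A^4+235814377620A^3+34730973441A^2-216866857320A-132565503600),$$ $$b_1 = 4(A-1)(254A+219)(354070194A^2+848446325A+620203644),$$ $$b_2 = (A-1)(254A+219)(35708622A^2+96399845A+73722213),$$ $$b_3 = 4(A-1)(254A+219)(72474A^2+210275A+164709).$$ Then there exist infinitely many $A \in \mathbb{Q}$ such that the curve $C_A : y^2 = g_A(x)$ contains $16$ rational points in arithmetic progression.
   Context: Rational points $P_j = (x_j, y_j) \in \mathbb{Q}^2$, $j=1,\dots,n$, on a curve $y^2 = g(x)$ are said to be in arithmetic progression if their $x$-coordinates form an arithmetic progression, i.e. $x_j = x_1 + (j-1)d$ for some nonzero $d \in \mathbb{Q}$; $n$ is the length of the progression. *)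

From Stdlib Require Import BinNat.
From HB Require Import structures.
From mathcomp Require Import all_boot all_order all_algebra.
Set Implicit Arguments. Unset Strict Implicit. Unset Printing Implicit Defensive.
Import Order.TTheory GRing.Theory Num.Theory.
Local Open Scope ring_scope.

(* Large numerals: unary nat literals are infeasible, so we write big
   constants as binary BinNums.N literals mapped into rat. *)
Fixpoint ratP (p : BinNums.positive) : rat :=
  match p with
  | BinNums.xH => 1
  | BinNums.xO q => 2 * ratP q
  | BinNums.xI q => 2 * ratP q + 1
  end.
Definition ratN (n : BinNums.N) : rat :=
  match n with BinNums.N0 => 0 | BinNums.Npos p => ratP p end.
Notation "[Q n ]" := (ratN n%num) (format "[Q  n ]").

Definition b0 (A : rat) : rat :=
  36 * ([Q 128941675300] * A ^+ 4 + [Q 235814377620] * A ^+ 3 + [Q 34730973441] * A ^+ 2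
        - [Q 216866857320] * A - [Q 132565503600]).
Definition b1 (A : rat) : rat :=
  4 * (A - 1) * ([Q 254] * A + [Q 219]) * ([Q 354070194] * A ^+ 2 + [Q 848446325] * A + [Q 620203644]).
Definition b2 (A : rat) : rat :=
  (A - 1) * ([Q 254] * A + [Q 219]) * ([Q 35708622] * A ^+ 2 + [Q 96399845] * A + [Q 73722213]).
Definition b3 (A : rat) : rat :=
  4 * (A - 1) * ([Q 254] * A + [Q 219]) * ([Q 72474] * A ^+ 2 + [Q 210275] * A + [Q 164709]).

Definition gA (A x : rat) : rat :=
  let t := x * (x - 15) in
  b3 A * t ^+ 3 + b2 A * t ^+ 2 + b1 A * t + b0 A.

Definition has_AP_points (g : rat -> rat) (n : nat) : Prop :=
  exists (x1 d : rat) (y : nat -> rat),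
    d != 0 /\ forall j : nat, (j < n)%N -> y j ^+ 2 = g (x1 + j%:R * d).

From Pilot Require Import Defs.
From Stdlib Require Import BinNat PArith.
From HB Require Import structures.
From mathcomp Require Import all_boot all_order all_algebra.
From mathcomp Require Import ring zify.
From mathcomp.algebra_tactics Require common.
Set Implicit Arguments. Unset Strict Implicit. Unset Printing Implicit Defensive.
Import GRing.Theory Num.Theory.
Local Open Scope ring_scope.

(* g_A depends on x only through x (x - 15), so its values at 0, ..., 15 are
   symmetric about 15/2; at x = 1, ..., 7 they are squares of explicit quadratics
   in A, and at x = 0 and x = 15 they equal 36 q(A) for a quartic q.  So it is
   enough to find infinitely many A with q(A) a square.  With A = 1 + 473 w,
   q(A) = 473^4 h(w) for a quartic h with h(0) = 1, and v^2 = h(w) is birational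
   to the elliptic curve E : Z^2 = T (1 + alpha T + beta T^2 + gamma T^3).
   Tripling a point of E whose coordinates have 3-adic valuations v(T) = 2e,
   v(Z) = e >= 1 gives valuations 2(e + 1) and e + 1, because the 3-division
   polynomial is then 3 times a 3-adic unit and the denominator of the tripling
   map is a 3-adic unit.  Starting from a point with e = 1, the corresponding
   values of w have valuations 1, 2, 3, ..., so the values of A are distinct. *)

Section PIntegral.

Variable p : nat.
Hypothesis p_prime : prime p.

Definition p_integral (r : rat) : Prop :=
  exists a b : int, ~~ (p %| b)%Z /\ r = a%:~R / b%:~R.

Definition p_unit (r : rat) : Prop :=
  exists a b : int, [/\ ~~ (p %| a)%Z, ~~ (p %| b)%Z & r = a%:~R / b%:~R].

Lemma ndvdz_mul (a b : int) : ~~ (p %| a)%Z -> ~~ (p %| b)%Z -> ~~ (p %| a * b)%Z.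
Proof. by rewrite !dvdzE abszM Euclid_dvdM // => /negPf -> /negPf ->. Qed.

Lemma ndvdz_intr_neq0 (b : int) : ~~ (p %| b)%Z -> b%:~R != 0 :> rat.
Proof. by apply: contra; rewrite intr_eq0 => /eqP ->; exact: dvdz0. Qed.

Lemma ndvdz1 : ~~ (p %| 1)%Z.
Proof. by rewrite dvdzE /= dvdn1; apply: contraTneq p_prime => ->. Qed.

Lemma p_integral_nat (n : nat) : p_integral n%:R.
Proof. by exists n, 1; rewrite divr1 -pmulrn ndvdz1. Qed.

Lemma p_integralD (x y : rat) : p_integral x -> p_integral y -> p_integral (x + y).
Proof.
move=> [a [b [hb ->]]] [c [d [hd ->]]].
exists (a * d + c * b), (b * d); split; first exact: ndvdz_mul.
have := ndvdz_intr_neq0 hb; have := ndvdz_intr_neq0 hd.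
by rewrite !(intrD, intrM) => d0 b0; field; rewrite b0 d0.
Qed.

Lemma p_integralN (x : rat) : p_integral x -> p_integral (- x).
Proof. by move=> [a [b [hb ->]]]; exists (- a), b; rewrite intrN mulNr. Qed.

Lemma p_integralM (x y : rat) : p_integral x -> p_integral y -> p_integral (x * y).
Proof.
move=> [a [b [hb ->]]] [c [d [hd ->]]].
exists (a * c), (b * d); split; first exact: ndvdz_mul.
have := ndvdz_intr_neq0 hb; have := ndvdz_intr_neq0 hd.
by rewrite !intrM => d0 b0; field; rewrite b0 d0.
Qed.

Lemma p_integralX (x : rat) (n : nat) : p_integral x -> p_integral (x ^+ n).
Proof.
move=> hx; elim: n => [|n IH]; first exact: (p_integral_nat 1).
by rewrite exprS; apply: p_integralM.
Qed.

Lemma p_unit_integral (u : rat) : p_unit u -> p_integral u.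
Proof. by move=> [a [b [_ hb ->]]]; exists a, b. Qed.

Lemma p_unit_neq0 (u : rat) : p_unit u -> u != 0.
Proof.
move=> [a [b [ha hb ->]]].
by rewrite mulf_neq0 ?invr_eq0 ?ndvdz_intr_neq0.
Qed.

Lemma p_unitM (u v : rat) : p_unit u -> p_unit v -> p_unit (u * v).
Proof.
move=> [a [b [ha hb ->]]] [c [d [hc hd ->]]].
exists (a * c), (b * d); split; try exact: ndvdz_mul.
have := ndvdz_intr_neq0 hb; have := ndvdz_intr_neq0 hd.
by rewrite !intrM => d0 b0; field; rewrite b0 d0.
Qed.

Lemma p_unit1 : p_unit 1.
Proof. by exists 1, 1; rewrite divr1 ndvdz1. Qed.

Lemma p_unitX (u : rat) (n : nat) : p_unit u -> p_unit (u ^+ n).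
Proof.
move=> hu; elim: n => [|n IH]; first exact: p_unit1.
by rewrite exprS; apply: p_unitM.
Qed.

Lemma p_unitV (u : rat) : p_unit u -> p_unit u^-1.
Proof. by move=> [a [b [ha hb ->]]]; exists b, a; rewrite invf_div. Qed.

Lemma p_unitN (u : rat) : p_unit u -> p_unit (- u).
Proof.
by move=> [a [b [ha hb ->]]]; exists (- a), b; rewrite intrN mulNr rpredN.
Qed.

Lemma p_unit_nat (n k r : nat) : (n = k * p + r)%N -> ~~ (p %| r)%N -> p_unit n%:R.
Proof.
move=> -> hr; exists (k * p + r)%N, 1; rewrite divr1 -pmulrn ndvdz1.
by rewrite dvdzE /= dvdn_addr ?dvdn_mull.
Qed.

Lemma p_unitD (u x : rat) : p_unit u -> p_integral x -> p_unit (u + p%:R * x).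
Proof.
move=> [a [b [ha hb ->]]] [c [d [hd ->]]].
exists (a * d + p%:Z * (c * b)), (b * d); split; try exact: ndvdz_mul.
  by rewrite rpredDr ?ndvdz_mul // dvdz_mulr // dvdzz.
have := ndvdz_intr_neq0 hb; have := ndvdz_intr_neq0 hd.
by rewrite !(intrD, intrM) => d0 b0; field; rewrite b0 d0.
Qed.

Lemma p_unit_not_mulp (x : rat) : p_integral x -> ~ p_unit (p%:R * x).
Proof.
move=> [c [d [hd ->]]] [a [b [ha hb E]]].
have b0 := ndvdz_intr_neq0 hb; have d0 := ndvdz_intr_neq0 hd.
have /intr_inj Ead : (a * d)%:~R = (p%:Z * c * b)%:~R :> rat.
  by rewrite !intrM -pmulrn -[a%:~R](divfK b0) -E; field.
by move: (ndvdz_mul ha hd); rewrite Ead -mulrA dvdz_mulr.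
Qed.

Lemma p_unit_expr_inj (m n : nat) (u v : rat) :
  p_unit u -> p_unit v -> p%:R ^+ m * u = p%:R ^+ n * v -> m = n.
Proof.
wlog le_mn : m n u v / (m <= n)%N.
  move=> W hu hv E; case: (leqP m n) => h; first exact: W E.
  by apply/esym/(W n m v u); rewrite ?(ltnW h) -?E.
move=> hu hv E; apply/eqP; rewrite eqn_leq le_mn leqNgt; apply/negP => lt_mn.
have pm0 : p%:R ^+ m != 0 :> rat by rewrite expf_neq0 // pnatr_eq0 -lt0n prime_gt0.
have Eu : u = p%:R * (p%:R ^+ (n - m).-1 * v).
  apply: (mulfI pm0); rewrite E mulrA -exprS prednK ?subn_gt0 //.
  by rewrite mulrA -exprD subnKC // ltnW.
apply: (p_unit_not_mulp (x := p%:R ^+ (n - m).-1 * v)); last by rewrite -Eu.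
by apply: p_integralM; [apply: p_integralX; exact: p_integral_nat | exact: p_unit_integral].
Qed.

End PIntegral.

Lemma ratP_natr (q : positive) : Defs.ratP q = (Pos.to_nat q)%:R.
Proof.
elim: q => [q IH|q IH|] //=; rewrite ?Pos2Nat.inj_xI ?Pos2Nat.inj_xO IH ?[RHS]mulrSr;
  by rewrite -[(2 * Pos.to_nat q)%coq_nat]/(2 * Pos.to_nat q)%N natrM.
Qed.

(* Decimal literals of at least 5000 are [Nat.of_num_uint d]; this is the form
   in which [ring] accepts them. *)
Lemma ratN_decimal (d : Number.uint) (n : N) : N.of_num_uint d = n -> ratN n = (Nat.of_num_uint d)%:R.
Proof.
move=> <-; case: d => d /=.
  by rewrite -common.uint_N_nat; case: (N.of_uint d) => [|q] //=; rewrite ratP_natr.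
by rewrite -common.hex_uint_N_nat; case: (N.of_hex_uint d) => [|q] //=; rewrite ratP_natr.
Qed.

Definition quarticA (A : rat) : rat :=
  128941675300%:R * A ^+ 4 + 235814377620%:R * A ^+ 3 + 34730973441%:R * A ^+ 2
  - 216866857320%:R * A - 132565503600%:R.

Lemma b0E (A : rat) : b0 A = 36 * quarticA A.
Proof.
rewrite /b0 /quarticA.
have [-> -> -> -> ->] : [/\ [Q 128941675300] = 128941675300%:R,
    [Q 235814377620] = 235814377620%:R, [Q 34730973441] = 34730973441%:R,
    [Q 216866857320] = 216866857320%:R & [Q 132565503600] = 132565503600%:R].
  by split; apply: ratN_decimal.
by [].
Qed.

Lemma b123E (A : rat) :
  [/\ b1 A = 4 * (A - 1) * (254 * A + 219)
             * (354070194%:R * A ^+ 2 + 848446325%:R * A + 620203644%:R),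
      b2 A = (A - 1) * (254 * A + 219)
             * (35708622%:R * A ^+ 2 + 96399845%:R * A + 73722213%:R)
    & b3 A = 4 * (A - 1) * (254 * A + 219)
             * (72474%:R * A ^+ 2 + 210275%:R * A + 164709%:R)].
Proof.
rewrite /b1 /b2 /b3.
have [-> ->] : [Q 254] = 254 /\ [Q 219] = 219 by split; exact: ratP_natr.
have [-> -> -> -> ->] : [/\ [Q 354070194] = 354070194%:R,
    [Q 848446325] = 848446325%:R, [Q 620203644] = 620203644%:R,
    [Q 35708622] = 35708622%:R & [Q 96399845] = 96399845%:R].
  by split; apply: ratN_decimal.
have [-> -> -> ->] : [/\ [Q 73722213] = 73722213%:R, [Q 72474] = 72474%:R,
    [Q 210275] = 210275%:R & [Q 164709] = 164709%:R].
  by split; apply: ratN_decimal.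
by [].
Qed.

Lemma gA_sym (A x : rat) : gA A (15 - x) = gA A x.
Proof. by rewrite /gA; move: (b0 A) (b1 A) (b2 A) (b3 A) => c0 c1 c2 c3; ring. Qed.

Definition ap_ordinate (A V : rat) (j : nat) : rat :=
  match j with
  | 0 => 6 * V
  | 1 => 1086864%:R * A ^+ 2 + 511020%:R * A - 255510%:R
  | 2 => 354840%:R * A ^+ 2 - 709680%:R * A - 987534%:R
  | 3 => 103380%:R * A ^+ 2 - 675030%:R * A - 770724%:R
  | 4 => 317244%:R * A ^+ 2 + 617070%:R * A + 408060%:R
  | 5 => 354840%:R * A ^+ 2 + 732024%:R * A + 255510%:R
  | 6 => 263904%:R * A ^+ 2 + 624420%:R * A + 454050%:R
  | _ => 94740%:R * A ^+ 2 + 647730%:R * A + 599904%:R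
  end.

Lemma gA_ap_ordinate (A V : rat) (j : nat) :
  quarticA A = V ^+ 2 -> (j <= 7)%N -> gA A j%:R = ap_ordinate A V j ^+ 2.
Proof.
move=> hV; have [e1 e2 e3] := b123E A.
rewrite /gA b0E e1 e2 e3; case: j => [_|]; first by cbn [ap_ordinate]; rewrite hV; ring.
do 7![case=> [_|]; first by cbn [ap_ordinate]; rewrite /quarticA; ring].
by move=> n hn; exfalso; move: hn; rewrite !ltnS ltn0 => /notF.
Qed.

Lemma has_AP_of_square (A V : rat) : quarticA A = V ^+ 2 -> has_AP_points (gA A) 16.
Proof.
move=> hV; exists 0, 1, (fun j => ap_ordinate A V (minn j (15 - j))).
split=> [|j lt_j16]; first exact: oner_neq0.
rewrite add0r mulr1; cbv beta; case: (leqP j 7) => [le_j7 | lt7j].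
  rewrite (minn_idPl _); last lia.
  by apply/esym/(gA_ap_ordinate hV).
have -> : j%:R = 15 - (15 - j)%:R :> rat by rewrite natrB ?subKr //; lia.
rewrite gA_sym (minn_idPr _); last lia.
by apply/esym/(gA_ap_ordinate hV); lia.
Qed.

Definition quartic_w (w : rat) : rat :=
  1 + 10166%:R * w + 6775269%:R * w ^+ 2 + 1588966340%:R * w ^+ 3
  + 128941675300%:R * w ^+ 4.

Lemma quarticA_affine (w : rat) : quarticA (1 + 473 * w) = 473 ^+ 4 * quartic_w w.
Proof. by rewrite /quarticA /quartic_w; ring. Qed.

(* Locked, so that unification never unfolds these numerals into unary naturals. *)
Fact cubic_key : unit. Proof. by []. Qed.
Definition alpha : rat := locked_with cubic_key 6775269%:R.
Definition beta : rat := locked_with cubic_key 15637665111240%:R.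
Definition gamma : rat := locked_with cubic_key 12356162896580939600%:R.
Lemma alphaE : alpha = 6775269%:R. Proof. exact: unlock. Qed.
Lemma betaE : beta = 15637665111240%:R. Proof. exact: unlock. Qed.
Lemma gammaE : gamma = 12356162896580939600%:R. Proof. exact: unlock. Qed.

Definition cubic (T : rat) : rat := 1 + alpha * T + beta * T ^+ 2 + gamma * T ^+ 3.

Definition on_curve (T Z : rat) : Prop := Z ^+ 2 = T * cubic T.

Definition map_den (T Z : rat) : rat := 2 * Z - 10166%:R * T - 2 * 1588966340%:R * T ^+ 2.
Definition map_w (T Z : rat) : rat := 2 * T * (2 - 38123240%:R * T) / map_den T Z.
Definition map_v (T Z : rat) : rat := -1 + map_w T Z * (map_w T Z / T - 10166%:R) / 2.

Lemma quartic_map_cleared (F : numFieldType) (c1 c2 c3 c4 d T D L w : F) :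
  T != 0 -> D != 0 -> w = 2 * T * L / D ->
  (1 + c1 * w + c2 * w ^+ 2 + c3 * w ^+ 3 + c4 * w ^+ 4
    - (-1 + w * (w / T - d) / 2) ^+ 2) * D ^+ 4
  = D ^+ 4 + c1 * (2 * T * L) * D ^+ 3 + c2 * (2 * T * L) ^+ 2 * D ^+ 2
    + c3 * (2 * T * L) ^+ 3 * D + c4 * (2 * T * L) ^+ 4
    - (- D ^+ 2 + T * L * (2 * L - d * D)) ^+ 2.
Proof. by move=> T0 D0 ->; field; rewrite T0 D0. Qed.

Lemma quartic_w_map (T Z : rat) : T != 0 -> map_den T Z != 0 -> on_curve T Z ->
  quartic_w (map_w T Z) = map_v T Z ^+ 2.
Proof.
move=> T0 D0 hZ; have D40 : map_den T Z ^+ 4 != 0 by rewrite expf_neq0.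
apply: (mulIf D40); apply/eqP.
rewrite -subr_eq0 -mulrBl /quartic_w /map_v.
rewrite (@quartic_map_cleared _ _ _ _ _ _ T _ (2 - 38123240%:R * T) (map_w T Z) T0 D0 erefl).
apply/eqP; transitivity ((Z ^+ 2 - T * cubic T) * (T * (64 - 3659831040%:R * T
    + 69762308548684800%:R * T ^+ 2 - 443260871959260385792000%:R * T ^+ 3))).
  by rewrite /map_den /cubic alphaE betaE gammaE; ring.
by apply/eqP; rewrite mulf_eq0; apply/orP; left; rewrite hZ subrr.
Qed.

(* In the coordinates x = 1/T, y = Z/T^2 the curve is y^2 = x^3 + alpha x^2
   + beta x + gamma, with b-invariants B2, ..., B8.  psi3 and psi4 are the
   division polynomials psi_3 and psi_4/psi_2 rewritten in T, and
   x(3P) = x - psi_2 psi_4 / psi_3^2 becomes T(3P) = triple_T T. *)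
Definition B2 : rat := 4 * alpha.
Definition B4 : rat := 2 * beta.
Definition B6 : rat := 4 * gamma.
Definition B8 : rat := 4 * alpha * gamma - beta ^+ 2.

Definition psi3 (T : rat) : rat :=
  3 + B2 * T + 3 * B4 * T ^+ 2 + 3 * B6 * T ^+ 3 + B8 * T ^+ 4.
Definition psi4 (T : rat) : rat :=
  2 + B2 * T + 5 * B4 * T ^+ 2 + 10 * B6 * T ^+ 3 + 10 * B8 * T ^+ 4
  + (B2 * B8 - B4 * B6) * T ^+ 5 + (B4 * B8 - B6 ^+ 2) * T ^+ 6.

Definition triple_den (T : rat) : rat := psi3 T ^+ 2 - 4 * cubic T * psi4 T.

Definition ynum_tail (T : rat) : rat :=
  27101076%:R + T * (
  344028632447280%:R + T * (
  2718355837247806712000%:R + T * (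
  14904242033559031341650880000%:R + T * (
  59547426662993639512696588995840000%:R + T * (
  176672002967398884916153944905702046720000%:R + T * (
  389228217317373142618706939918198602609520640000%:R + T * (
  627158965558169443514270812404602356316174570496000000%:R + T * (
  715784588652877091677249701127966511591347755499458560000000%:R + T * (
  545890347246314884158553581505718190297742767188126501683200000000%:R + T * (
  248340181524406463915449911602453051593697153894607012534116352000000000%:R + T * (
  50651324788469717964483564112771492105797756292553061572250864320512000000000%:R))))))))))).

Definition triple_ynum (T : rat) : rat := 1 + T * ynum_tail T.

Definition triple_T (T : rat) : rat := T * psi3 T ^+ 2 / triple_den T.
Definition triple_Z (T Z : rat) : rat := Z * psi3 T * triple_ynum T / triple_den T ^+ 2.

Lemma cubic_triple_T (T : rat) : triple_den T != 0 ->
  cubic (triple_T T) * triple_den T ^+ 3 = cubic T * triple_ynum T ^+ 2.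
Proof.
move=> M0; transitivity (triple_den T ^+ 3 + alpha * T * psi3 T ^+ 2 * triple_den T ^+ 2
  + beta * T ^+ 2 * psi3 T ^+ 4 * triple_den T + gamma * T ^+ 3 * psi3 T ^+ 6).
  rewrite /triple_T [cubic _]/cubic; move: (triple_den T) M0 (psi3 T) => M M0 P.
  by field.
by rewrite /triple_den /psi4 /psi3 /cubic /triple_ynum /ynum_tail /B2 /B4 /B6 /B8 alphaE betaE gammaE; ring.
Qed.

Lemma on_curve_triple (T Z : rat) : triple_den T != 0 -> on_curve T Z ->
  on_curve (triple_T T) (triple_Z T Z).
Proof.
move=> M0 hZ.
have hC : cubic (triple_T T) = cubic T * triple_ynum T ^+ 2 / triple_den T ^+ 3.
  by rewrite -cubic_triple_T // mulfK // expf_neq0.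
rewrite /on_curve hC /triple_Z /triple_T; move: hZ; rewrite /on_curve.
move: (triple_den T) M0 (cubic T) (triple_ynum T) (psi3 T) => M M0 g N P hZ.
by rewrite !exprMn hZ; field.
Qed.

Fact prime3 : prime 3. Proof. by []. Qed.

Local Notation integral3 := (p_integral 3).
Local Notation unit3 := (p_unit 3).

(* The hypothesis branches unify up to conversion, so terms whose definitions
   hide large numerals are generalized before these tactics are called. *)
Ltac prove_integral3 := repeat match goal with
  | |- integral3 (_ + _)%R => apply: (p_integralD prime3)
  | |- integral3 (- _)%R => apply: p_integralN
  | |- integral3 (_ * _)%R => apply: (p_integralM prime3)
  | |- integral3 (_ ^+ _)%R => apply: (p_integralX prime3)
  | |- integral3 (_ %:R)%R => apply: (p_integral_nat prime3)
  | |- integral3 1%R => exact: (p_integral_nat prime3 1)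
  | |- integral3 B2 => rewrite /B2
  | |- integral3 B4 => rewrite /B4
  | |- integral3 B6 => rewrite /B6
  | |- integral3 B8 => rewrite /B8
  | |- integral3 alpha => rewrite alphaE
  | |- integral3 beta => rewrite betaE
  | |- integral3 gamma => rewrite gammaE
  | H : integral3 ?x |- integral3 ?x => exact: H
  | H : unit3 ?x |- integral3 ?x => exact: (p_unit_integral H)
  end.

Definition div9 (T : rat) : Prop := exists2 S, integral3 S & T = 9 * S.

Ltac prove_unit3 := repeat match goal with
  | |- unit3 (_ * _)%R => apply: (p_unitM prime3)
  | |- unit3 (_ ^+ _)%R => apply: (p_unitX prime3)
  | |- unit3 (_ ^-1)%R => apply: p_unitV
  | H : unit3 ?x |- unit3 ?x => exact: H
  end.

Lemma psi3_div9 (T : rat) : div9 T -> exists2 P, integral3 P & psi3 T = 3 * (1 + 3 * P).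
Proof.
case=> S hS ->.
exists (4 * alpha * S + 54 * beta * S ^+ 2 + 972 * gamma * S ^+ 3 + 729 * B8 * S ^+ 4).
  by prove_integral3.
by rewrite /psi3 /B2 /B4 /B6; move: B8 => b8; ring.
Qed.

Lemma triple_den_div9 (T : rat) : div9 T -> unit3 (triple_den T).
Proof.
move=> d9; have [P hP hpsi] := psi3_div9 d9; case: d9 => S hS eT.
have hT : integral3 T by rewrite eT; prove_integral3.
have [x hx hcubic] : exists2 x, integral3 x & cubic T = 1 + 3 * x.
  exists (3 * S * (alpha + beta * T + gamma * T ^+ 2)); first by prove_integral3.
  by rewrite /cubic eT; ring.
have [y hy hpsi4] : exists2 y, integral3 y & psi4 T = 2 + 3 * y.
  exists (3 * S * (B2 + 5 * B4 * T + 10 * B6 * T ^+ 2 + 10 * B8 * T ^+ 3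
    + (B2 * B8 - B4 * B6) * T ^+ 4 + (B4 * B8 - B6 ^+ 2) * T ^+ 5)); first by prove_integral3.
  by rewrite /psi4 eT; move: B2 B4 B6 B8 => b2 b4 b6 b8; ring.
rewrite /triple_den hpsi hcubic hpsi4.
have -> : (3 * (1 + 3 * P)) ^+ 2 - 4 * (1 + 3 * x) * (2 + 3 * y)
    = 1 + 3 * (18 * P + 27 * P ^+ 2 - 8 * x - 4 * y - 12 * x * y) by ring.
by apply: (p_unitD prime3 (p_unit1 prime3)); prove_integral3.
Qed.

Lemma triple_ynum_div9 (T : rat) : div9 T -> unit3 (triple_ynum T).
Proof.
case=> S hS eT; have hT : integral3 T by rewrite eT; prove_integral3.
have hN : integral3 (ynum_tail T) by rewrite /ynum_tail; prove_integral3.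
rewrite /triple_ynum; move: (ynum_tail T) hN => N hN.
have -> : 1 + T * N = 1 + 3 * (3 * S * N) by rewrite eT; ring.
by apply: (p_unitD prime3 (p_unit1 prime3)); prove_integral3.
Qed.

Definition level (e : nat) (T Z : rat) : Prop :=
  [/\ exists2 u, unit3 u & T = (3 ^+ e.+1) ^+ 2 * u,
      exists2 v, unit3 v & Z = 3 ^+ e.+1 * v
    & on_curve T Z].

Lemma level_triple (e : nat) (T Z : rat) : level e T Z -> level e.+1 (triple_T T) (triple_Z T Z).
Proof.
case=> [[u hu eT] [v hv eZ] hc].
have d9 : div9 T by exists ((3 ^+ e) ^+ 2 * u); [prove_integral3 | rewrite eT [_ ^+ e.+1]exprS; ring].
have [P hP hpsi] := psi3_div9 d9.
have hM := triple_den_div9 d9; have hN := triple_ynum_div9 d9.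
have M0 := p_unit_neq0 hM.
have hP1 : unit3 (1 + 3 * P) := p_unitD prime3 (p_unit1 prime3) hP.
split; last exact: on_curve_triple.
- rewrite /triple_T hpsi; move: (triple_den T) hM M0 => M hM M0.
  exists (u * (1 + 3 * P) ^+ 2 / M); first by prove_unit3.
  by rewrite eT [_ ^+ e.+2]exprS; field.
- rewrite /triple_Z hpsi; move: (triple_den T) (triple_ynum T) hM hN M0 => M N hM hN M0.
  exists (v * (1 + 3 * P) * N / M ^+ 2); first by prove_unit3.
  by rewrite eZ [_ ^+ e.+2]exprS; field.
Qed.

Lemma level_map_w (e : nat) (T Z : rat) : level e T Z ->
  [/\ T != 0, map_den T Z != 0 & exists2 w, unit3 w & map_w T Z = 3 ^+ e.+1 * w].
Proof.
case=> [[u hu eT] [v hv eZ] _].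
have u2 : unit3 2 by apply: (p_unit_nat prime3 (k := 0) (r := 2)).
have [D hD eD] : exists2 D, unit3 D & map_den T Z = 3 ^+ e.+1 * D.
  exists (2 * v - 3 * (10166%:R * 3 ^+ e * u + 18 * 1588966340%:R * (3 ^+ e) ^+ 3 * u ^+ 2)).
    by rewrite -mulrN; apply: (p_unitD prime3); [prove_unit3 | prove_integral3].
  by rewrite /map_den eT eZ [_ ^+ e.+1]exprS; ring.
have e0 : (3 : rat) ^+ e != 0 by rewrite expf_neq0.
have T0 : T != 0 by rewrite eT mulf_neq0 ?expf_neq0 ?(p_unit_neq0 hu).
have D0 : map_den T Z != 0 by rewrite eD mulf_neq0 ?expf_neq0 ?(p_unit_neq0 hD).
split; [exact: T0 | exact: D0 |].
exists (2 * u * (2 - 3 * (3 * 38123240%:R * (3 ^+ e) ^+ 2 * u)) / D).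
  rewrite -mulrN; apply: (p_unitM prime3); last exact: p_unitV.
  by apply: (p_unitM prime3); [prove_unit3 | apply: (p_unitD prime3 u2); prove_integral3].
have D0' := p_unit_neq0 hD.
by rewrite /map_w eD eT [_ ^+ e.+1]exprS; field; rewrite D0' e0.
Qed.

Lemma level0 (u v : rat) : unit3 u -> unit3 v -> on_curve (9 * u) (3 * v) ->
  level 0 (9 * u) (3 * v).
Proof. by move=> hu hv hc; split=> //; [exists u | exists v] => //; ring. Qed.

Definition base_T : rat := 9 * - (30025238061841%:R / 585772938409029361580%:R).
Definition base_Z : rat := 3 * (100455739228316935322540129193302272%:R
                                / 4289124192154356323615835783931779751205%:R).

Lemma level_base : level 0 base_T base_Z.
Proof.
apply: level0.
- apply/p_unitN/(p_unitM prime3); last apply: p_unitV.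
    by apply: (p_unit_nat prime3 (k := 10008412687280) (r := 1)); [ring | by []].
  by apply: (p_unit_nat prime3 (k := 195257646136343120526) (r := 2)); [ring | by []].
- apply: (p_unitM prime3); last apply: p_unitV.
    by apply: (p_unit_nat prime3 (k := 33485246409438978440846709731100757) (r := 1));
      [ring | by []].
  by apply: (p_unit_nat prime3 (k := 1429708064051452107871945261310593250401) (r := 2));
    [ring | by []].
- by rewrite /on_curve /cubic alphaE betaE gammaE; field.
Qed.

Definition triple (P : rat * rat) : rat * rat := (triple_T P.1, triple_Z P.1 P.2).

Definition point (k : nat) : rat * rat := iter k triple (base_T, base_Z).

Definition A_seq (k : nat) : rat := 1 + 473 * map_w (point k).1 (point k).2.

Lemma level_point (k : nat) : level k (point k).1 (point k).2.
Proof. by elim: k => [|k IH]; [exact: level_base | exact: level_triple IH]. Qed.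

Lemma A_seq_inj : injective A_seq.
Proof.
have n473 : 473 != 0 :> rat by [].
move=> i j; rewrite /A_seq => /addrI /(mulfI n473) Ew.
have [_ _ [u hu Eu]] := level_map_w (level_point i).
have [_ _ [v hv Ev]] := level_map_w (level_point j).
rewrite Eu Ev in Ew.
by case: (p_unit_expr_inj prime3 hu hv Ew).
Qed.

Lemma quarticA_A_seq (k : nat) : exists V, quarticA (A_seq k) = V ^+ 2.
Proof.
have [T0 D0 _] := level_map_w (level_point k); have [_ _ hc] := level_point k.
exists (473 ^+ 2 * map_v (point k).1 (point k).2).
rewrite /A_seq quarticA_affine (quartic_w_map T0 D0 hc).
by move: (map_v _ _) => V; ring.
Qed.

Lemma exists_notin_inj (T : eqType) (f : nat -> T) (s : seq T) :
  injective f -> exists k, f k \notin s.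
Proof.
move=> f_inj; pose L := map f (iota 0 (size s).+1).
have uL : uniq L by rewrite map_inj_uniq ?iota_uniq.
have [/allP sub | ] := boolP (all (mem s) L).
  by have := uniq_leq_size uL sub; rewrite size_map size_iota ltnn.
by rewrite -has_predC => /hasP [_ /mapP [k _ ->] hk]; exists k.
Qed.

Theorem theorem3 :
  forall s : seq rat, exists A : rat, A \notin s /\ has_AP_points (gA A) 16.
Proof.
move=> s; have [k hk] := exists_notin_inj s A_seq_inj.
have [V hV] := quarticA_A_seq k.
by exists (A_seq k); split; [exact: hk | exact: has_AP_of_square hV].
Qed.
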